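(* Assume $M$ is projective in $\sigma[M]$. Then $\mathrm{Nil}_*(M)=\mathrm{Nil}_*(M)\cdot M=M\text{-}\mathrm{Nil}_*(M)$.
   Context: $R$ is a ring with identity, modules are unital left $R$-modules, $M$ is a fixed left $R$-module; $\sigma[M]$ is the full subcategory of $R$-modules isomorphic to submodules of $M$-generated modules. For $N\le M$ and a module $X$, $N\cdot X$ is the intersection of the kernels of all homomorphisms $X\to W$ where $W$ ranges over modules with $f(N)=0$ for all $f\in\mathrm{Hom}_R(M,W)$. An element $x$ of a module $X$ is strongly nilpotent if $x=\sum_{i=1}^r a_ix_i$ with $a_i\in R$, $x_i\in X$, such that for each $i$ and every sequence $a_{i1},a_{i2},\dots$ with $a_{i1}=a_i$ and $a_{i,n+1}\in a_{in}Ra_{in}$ for all $n$, there is $k$ with $a_{ik}Rx_i=0$; $\mathrm{Nil}_*(X)$ is the set of strongly nilpotent elements of $X$ (a submodule of $X$). For $X\in\sigma[M]$, $x\in X$ is strongly $M$-nilpotent if $x=\sum_{i=1}^n r_if_i(m_i)$ with $r_i\in R$, $m_i\in M$, $x_i\in X$, $f_i\in\mathrm{Hom}_R(M,Rx_i)$, such that for each $i$ and every sequence $r_{i1},r_{i2},\dots$ with $r_{i1}=r_i$ and $r_{i,t+1}\in r_{it}Rr_{it}$ for all $t$, there is $k$ with $r_{ik}Rf_i(m_i)=0$; $M\text{-}\mathrm{Nil}_*(X)$ is the set of strongly $M$-nilpotent elements of $X$. *)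

From HB Require Import structures.
From mathcomp Require Import all_boot all_order all_algebra.
Set Implicit Arguments. Unset Strict Implicit. Unset Printing Implicit Defensive.
Import GRing.Theory.
Local Open Scope ring_scope.

Section ModuleDefs.
Variable R : pzRingType.

(* Y is M-generated: Y is the trace of M in Y, i.e. every element of Y is a
   finite sum f_1(m_1)+...+f_n(m_n) with f_i in Hom(M,Y)  (equivalently Y is
   an epimorphic image of a direct sum of copies of M). *)
Definition M_generated (M Y : lmodType R) : Prop :=
  forall y : Y, exists n (f : 'I_n -> {linear M -> Y}) (m : 'I_n -> M),
    y = \sum_(i < n) f i (m i).

(* X belongs to sigma[M]: X is isomorphic to a submodule of an M-generated
   module, i.e. X embeds (injective R-linear map) into some M-generated module. *)
Definition in_sigma (M X : lmodType R) : Prop :=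
  exists (Y : lmodType R) (g : {linear X -> Y}), M_generated M Y /\ injective g.

Definition projective_in_sigma (M : lmodType R) : Prop :=
  forall (A B : lmodType R), in_sigma M A -> in_sigma M B ->
  forall (g : {linear A -> B}), (forall b : B, exists a : A, g a = b) ->
  forall (f : {linear M -> B}), exists h : {linear M -> A},
    forall m : M, g (h m) = f m.

Definition prodMod (M : lmodType R) (N : M -> Prop) (X : lmodType R) : X -> Prop :=
  fun x => forall (W : lmodType R),
    (forall (f : {linear M -> W}) (n : M), N n -> f n = 0) ->
    forall h : {linear X -> W}, h x = 0.

Definition snil_cond (X : lmodType R) (a : R) (x : X) : Prop :=
  forall s : nat -> R, s 0%N = a ->
    (forall n, exists r : R, s n.+1 = s n * r * s n) ->
    exists k, forall r : R, (s k * r) *: x = 0.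

Definition Nil_star (X : lmodType R) : X -> Prop :=
  fun x => exists n (a : 'I_n -> R) (xs : 'I_n -> X),
    x = \sum_(i < n) a i *: xs i /\ forall i, snil_cond (a i) (xs i).

(* M-Nil_*(X): strongly M-nilpotent elements of X; f_i in Hom(M, R x_i) is
   encoded as an R-linear map M -> X with image inside R x_i. *)
Definition M_Nil_star (M X : lmodType R) : X -> Prop :=
  fun x => exists n (r : 'I_n -> R) (m : 'I_n -> M) (xs : 'I_n -> X)
             (f : 'I_n -> {linear M -> X}),
    x = \sum_(i < n) r i *: f i (m i) /\
    forall i, (forall m' : M, exists t : R, f i m' = t *: xs i) /\
              snil_cond (r i) (f i (m i)).

End ModuleDefs.

From HB Require Import structures.
From mathcomp Require Import all_boot all_order all_algebra.
From mathcomp Require Import boolp finmap monalg.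
Set Implicit Arguments. Unset Strict Implicit. Unset Printing Implicit Defensive.
Import GRing.Theory.
Local Open Scope ring_scope.
Local Open Scope quotient_scope.

(* Both equalities rest on two closure properties of Nil_*: it is a
   submodule, and every homomorphism maps strongly nilpotent elements to
   strongly nilpotent elements (the annihilation condition a_k R x = 0 is
   transported by linear maps).
   - Nil_*(M).M <= Nil_*(M): the quotient W = M / Nil_*(M) lies in sigma[M].
     Any f : M -> W lifts through the projection p : M -> W to an
     endomorphism h of M, so f kills Nil_*(M); hence p kills Nil_*(M).M,
     i.e. Nil_*(M).M <= ker p = Nil_*(M).  The other inclusion is trivial.
   - Nil_*(M) <= M-Nil_*(M): the direct sum A = (+)_{z in M} Rz lies in
     sigma[M] and maps onto M by summation.  Lifting the identity of M gives
     y = sum_z h_z(y) with homomorphisms h_z : M -> Rz, so a.y = sum_z a.h_z(y)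
     exhibits a.y as strongly M-nilpotent. *)

Section QuotientModule.
Variables (R : pzRingType) (V : lmodType R) (S : zmodClosed V).
Hypothesis S_scale : scaler_closed S.

(* The carrier mentions S_scale so that its module structure, which depends
   on S being closed under scaling, can be declared canonical. *)
Definition quotmod of scaler_closed S := Quotient.quot S.
Local Notation Q := (quotmod S_scale).
HB.instance Definition _ := GRing.Zmodule.on Q.

Definition quot_scale (a : R) := lift_op1 Q ( *:%R a).

Lemma pi_scale a : {morph \pi : x / a *: x >-> quot_scale a x}.
Proof.
move=> x; unlock quot_scale; apply/eqP; rewrite piE Quotient.equivE.
by rewrite -scalerBr S_scale // Quotient.idealrBE reprK.
Qed.
Canonical pi_scale_morph a := PiMorph1 (pi_scale a).

Lemma quot_scaleA a b v : quot_scale a (quot_scale b v) = quot_scale (a * b) v.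
Proof. by rewrite -[v]reprK !piE scalerA. Qed.
Lemma quot_scale1 : left_id 1 quot_scale.
Proof. by move=> v; rewrite -[v]reprK !piE scale1r. Qed.
Lemma quot_scaleDr : right_distributive quot_scale +%R.
Proof. by move=> a u v; rewrite -[u]reprK -[v]reprK !piE scalerDr. Qed.
Lemma quot_scaleDl v : {morph quot_scale^~ v : a b / a + b}.
Proof. by move=> a b; rewrite -[v]reprK !piE scalerDl. Qed.

HB.instance Definition _ := GRing.Zmodule_isLmodule.Build R Q
  quot_scaleA quot_scale1 quot_scaleDr quot_scaleDl.

Definition quot_proj (x : V) : Q := \pi x.

Lemma quot_proj_linear : linear quot_proj.
Proof. by move=> a x y; rewrite /quot_proj raddfD /= pi_scale. Qed.
HB.instance Definition _ := GRing.isLinear.Build R V Q _ quot_proj quot_proj_linear.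

Lemma quot_proj_eq0 x : (quot_proj x == 0) = (x \in S).
Proof. by rewrite -[x in RHS]subr0 Quotient.idealrBE /= raddf0. Qed.

Lemma quot_proj_surjective (w : Q) : exists x, quot_proj x = w.
Proof. by exists (repr w); rewrite /quot_proj reprK. Qed.
End QuotientModule.
Arguments quotmod {R V S} _.
Arguments quot_proj {R V S} S_scale.

Section DirectSum.
Variables (R : pzRingType) (K : choiceType) (V : lmodType R).

Definition dsum := {malg V[K]}.
HB.instance Definition _ := GRing.Zmodule.on dsum.

Definition dsum_scale (a : R) (g : dsum) : dsum := [malg k in msupp g => a *: g@_k].

Lemma mcoeff_dsumZ a g k : (dsum_scale a g)@_k = a *: g@_k.
Proof. by rewrite mcoeffE; case: msuppP; rewrite ?scaler0. Qed.

Lemma dsum_scaleA a b g : dsum_scale a (dsum_scale b g) = dsum_scale (a * b) g.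
Proof. by apply/malgP => k; rewrite !mcoeff_dsumZ scalerA. Qed.
Lemma dsum_scale1 : left_id 1 dsum_scale.
Proof. by move=> g; apply/malgP => k; rewrite mcoeff_dsumZ scale1r. Qed.
Lemma dsum_scaleDr : right_distributive dsum_scale +%R.
Proof. by move=> a g h; apply/malgP => k; rewrite !(mcoeffD, mcoeff_dsumZ) scalerDr. Qed.
Lemma dsum_scaleDl g : {morph dsum_scale^~ g : a b / a + b}.
Proof. by move=> a b; apply/malgP => k; rewrite !(mcoeffD, mcoeff_dsumZ) scalerDl. Qed.

HB.instance Definition _ := GRing.Zmodule_isLmodule.Build R dsum
  dsum_scaleA dsum_scale1 dsum_scaleDr dsum_scaleDl.

Definition dsum_inj (k : K) (v : V) : dsum := << v *g k >>.
Lemma dsum_inj_linear k : linear (dsum_inj k).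
Proof.
move=> a u v; apply/malgP => k'.
by rewrite mcoeffD mcoeff_dsumZ !mcoeffU; case: eqP; rewrite ?scaler0 ?addr0.
Qed.
HB.instance Definition _ k := GRing.isLinear.Build R V dsum _ (dsum_inj k) (dsum_inj_linear k).

Definition dsum_add (g : dsum) : V := \sum_(k <- msupp g) g@_k.

Lemma dsum_addEw (d : {fset K}) g : (msupp g `<=` d)%fset ->
  dsum_add g = \sum_(k <- d) g@_k.
Proof. by move=> le; apply: big_fset_incl => // k _ /mcoeff_outdom. Qed.

Lemma dsum_add_linear : linear dsum_add.
Proof.
move=> a g h; set d := (msupp g `|` msupp h `|` msupp (a *: g + h))%fset.
have sub_g : (msupp g `<=` d)%fset := fsubset_trans (fsubsetUl _ _) (fsubsetUl _ _).
have sub_h : (msupp h `<=` d)%fset := fsubset_trans (fsubsetUr _ _) (fsubsetUl _ _).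
have sub_gh : (msupp (a *: g + h) `<=` d)%fset := fsubsetUr _ _.
rewrite (dsum_addEw sub_g) (dsum_addEw sub_h) (dsum_addEw sub_gh).
by rewrite scaler_sumr -big_split; apply: eq_bigr => k _; rewrite mcoeffD mcoeff_dsumZ.
Qed.
HB.instance Definition _ := GRing.isLinear.Build R dsum V _ dsum_add dsum_add_linear.

Lemma dsum_add_inj k v : dsum_add (dsum_inj k v) = v.
Proof. by rewrite (dsum_addEw msuppU_le) big_seq_fset1 mcoeffUU. Qed.
End DirectSum.

Section FiniteSums.
Variables (R : pzRingType) (V : lmodType R).

Definition sum_of (P : V -> Prop) (x : V) : Prop :=
  exists n (v : 'I_n -> V), x = \sum_(i < n) v i /\ forall i, P (v i).

Lemma sum_of1 (P : V -> Prop) v : P v -> sum_of P v.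
Proof. by move=> Pv; exists 1%N, (fun=> v); rewrite big_ord1. Qed.

Lemma sum_ofD (P : V -> Prop) x y : sum_of P x -> sum_of P y -> sum_of P (x + y).
Proof.
move=> [n1 [v1 [-> P1]]] [n2 [v2 [-> P2]]].
exists (n1 + n2)%N, (fun i => match split i with inl j => v1 j | inr j => v2 j end).
split; last by move=> i; case: (split i).
rewrite big_split_ord; congr (_ + _); apply: eq_bigr => j _.
- by rewrite (unsplitK (inl _ j)).
- by rewrite (unsplitK (inr _ j)).
Qed.

Lemma sum_of_sum (P : V -> Prop) (I : Type) (s : seq I) (F : I -> V) :
  (forall i, sum_of P (F i)) -> sum_of P (\sum_(i <- s) F i).
Proof.
move=> PF; elim: s => [|i s IHs]; last by rewrite big_cons; apply: sum_ofD.
by exists 0%N, (fun=> 0); rewrite big_nil big_ord0; split => // -[].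
Qed.

Lemma sum_of_bind (P Q : V -> Prop) x :
  (forall v, P v -> sum_of Q v) -> sum_of P x -> sum_of Q x.
Proof. by move=> PQ [n [v [-> Pv]]]; apply: sum_of_sum => i; apply: PQ. Qed.
End FiniteSums.

Section StrongNilpotence.
Variable R : pzRingType.

Lemma snil_cond_linear (X Y : lmodType R) (f : {linear X -> Y}) a x :
  snil_cond a x -> snil_cond a (f x).
Proof.
move=> nil_ax s s0 s_step; have [k ann_k] := nil_ax s s0 s_step.
by exists k => r; rewrite -linearZ ann_k linear0.
Qed.

(* If (a, x) satisfies the condition, so does (r a, x): a sequence
   s_0 = r a, s_{n+1} = s_n t_n s_n factors as s_n = r u_n with
   u_0 = a, u_{n+1} = u_n (t_n r) u_n. *)
Lemma snil_cond_mull (X : lmodType R) (r a : R) (x : X) :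
  snil_cond a x -> snil_cond (r * a) x.
Proof.
move=> nil_ax s s0 s_step; have [t st] := choice s_step.
pose u := fix u n := if n is n'.+1 then u n' * (t n' * r) * u n' else a.
have s_u n : s n = r * u n.
  by elim: n => [|n IHn] //=; rewrite st IHn !mulrA.
have [n|k ann_k] := nil_ax u erefl; first by exists (t n * r).
by exists k => q; rewrite s_u -mulrA -scalerA ann_k scaler0.
Qed.

Definition nil_term (X : lmodType R) (v : X) : Prop :=
  exists a (y : X), v = a *: y /\ snil_cond a y.

Lemma Nil_starE (X : lmodType R) (x : X) : Nil_star x <-> sum_of (@nil_term X) x.
Proof.
split=> [[n [a [y [-> nil_ay]]]]|[n [v [-> nil_v]]]].
  by exists n, (fun i => a i *: y i); split=> // i; exists (a i), (y i).
have [a /choice[y ay_spec]] := choice nil_v.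
exists n, a, y; split=> [|i]; last by case: (ay_spec i).
by apply: eq_bigr => i _; case: (ay_spec i).
Qed.
End StrongNilpotence.

Section NilSubmodule.
Variables (R : pzRingType) (X : lmodType R).

Lemma Nil_starZ a (x : X) : Nil_star x -> Nil_star (a *: x).
Proof.
move=> /Nil_starE[n [v [-> nil_v]]]; apply/Nil_starE.
rewrite scaler_sumr; apply: sum_of_sum => i; apply: sum_of1.
have [b [y [-> nil_by]]] := nil_v i.
by exists (a * b), y; rewrite scalerA; split => //; apply: snil_cond_mull.
Qed.

Lemma Nil_starB (x y : X) : Nil_star x -> Nil_star y -> Nil_star (x - y).
Proof.
move=> /Nil_starE nil_x nil_y; apply/Nil_starE; apply: sum_ofD => //.
by rewrite -scaleN1r; apply/Nil_starE/Nil_starZ.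
Qed.

Lemma Nil_star_linear (Y : lmodType R) (f : {linear X -> Y}) x :
  Nil_star x -> Nil_star (f x).
Proof.
move=> [n [a [y [-> nil_ay]]]]; exists n, a, (fun i => f (y i)).
by rewrite linear_sum; split=> [|i]; [apply: eq_bigr => i _; rewrite linearZ
  | apply: snil_cond_linear].
Qed.

Definition nil_pred : {pred X} := fun x => `[< Nil_star x >].

Lemma nil_pred_zmod : zmod_closed nil_pred.
Proof.
split; first by apply/asboolP; exists 0%N, (fun=> 0), (fun=> 0); rewrite big_ord0; split => // -[].
by move=> x y /asboolP nil_x /asboolP nil_y; apply/asboolP; exact: Nil_starB.
Qed.
HB.instance Definition _ := GRing.isZmodClosed.Build X nil_pred nil_pred_zmod.

Lemma nil_pred_scale : scaler_closed nil_pred.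
Proof. by move=> a x /asboolP nil_x; apply/asboolP; exact: Nil_starZ. Qed.
End NilSubmodule.
Arguments nil_pred {R} X.

Section SigmaM.
Variables (R : pzRingType) (M : lmodType R).

Lemma generated_of_surjective (Y : lmodType R) (p : {linear M -> Y}) :
  (forall y, exists m, p m = y) -> M_generated M Y.
Proof.
move=> p_surj y; have [m <-] := p_surj y.
by exists 1%N, (fun=> p), (fun=> m); rewrite big_ord1.
Qed.

Lemma generated_in_sigma (Y : lmodType R) : M_generated M Y -> in_sigma M Y.
Proof. by move=> genY; exists Y, idfun; split. Qed.

Lemma self_in_sigma : in_sigma M M.
Proof. by apply/generated_in_sigma/(@generated_of_surjective _ idfun) => y; exists y. Qed.

Lemma dsum_generated (K : choiceType) : M_generated M (dsum K M).
Proof.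
move=> g; pose k_ := tnth (in_tuple (msupp g)).
exists (size (msupp g)), (fun i => dsum_inj (k_ i)), (fun i => g@_(k_ i)).
by rewrite {1}[g]monalgE big_tnth.
Qed.
End SigmaM.

Section NilTimesM.
Variables (R : pzRingType) (M : lmodType R).

Lemma prodMod_sub (N : M -> Prop) x : N x -> @prodMod R M N M x.
Proof. by move=> Nx W N_killed h; exact: N_killed. Qed.

(* Nil_*(M).M <= Nil_*(M), through the projection M -> M / Nil_*(M). *)
Lemma prodMod_Nil_star : projective_in_sigma M ->
  forall x : M, @prodMod R M (@Nil_star R M) M x -> Nil_star x.
Proof.
move=> projM x x_prod.
pose W := quotmod (@nil_pred_scale R M).
pose p : {linear M -> W} := quot_proj (@nil_pred_scale R M).
have p_ker z : p z = 0 <-> Nil_star z.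
  by rewrite (rwP eqP) quot_proj_eq0; split => /asboolP.
have p_surj w : exists m, p m = w := quot_proj_surjective w.
have W_sigma : in_sigma M W by apply/generated_in_sigma/generated_of_surjective/p_surj.
apply/p_ker/x_prod => f n nil_n.
have [h ph] := projM M W (self_in_sigma M) W_sigma p p_surj f.
by rewrite -ph; apply/p_ker/Nil_star_linear.
Qed.
End NilTimesM.

(* The module (+)_{z in M} Rz, realised inside (+)_{z in M} M as the
   elements whose z-coordinate lies in Rz for every z. *)
Section CyclicSum.
Variables (R : pzRingType) (M : lmodType R).

Definition cyclic_coords : {pred dsum M M} :=
  fun g => `[< forall k, exists t : R, g@_k = t *: k >].

Lemma cyclic_coords_closed : subsemimod_closed cyclic_coords.
Proof.
split; first split.
- by apply/asboolP => k; exists 0; rewrite mcoeff0 scale0r.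
- move=> g h /asboolP cg /asboolP ch; apply/asboolP => k.
  have [[t gk] [u hk]] := (cg k, ch k).
  by exists (t + u); rewrite mcoeffD gk hk scalerDl.
- move=> a g /asboolP cg; apply/asboolP => k; have [t gk] := cg k.
  by exists (a * t); rewrite mcoeff_dsumZ gk scalerA.
Qed.
HB.instance Definition _ := GRing.isSubmodClosed.Build R (dsum M M)
  cyclic_coords cyclic_coords_closed.

Definition cyclic_sum := {g : dsum M M | cyclic_coords g}.
HB.instance Definition _ := [isSub of cyclic_sum for (@sval _ cyclic_coords)].
HB.instance Definition _ := [Choice of cyclic_sum by <:].
HB.instance Definition _ := [SubChoice_isSubLmodule of cyclic_sum by <:].

Lemma cyclic_sum_in_sigma : in_sigma M cyclic_sum.
Proof. by exists (dsum M M), val; split; [exact: dsum_generated | exact: val_inj]. Qed.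

Lemma cyclic_coordsP (g : cyclic_sum) k : exists t : R, (val g)@_k = t *: k.
Proof. by case: g => /= g /asboolP. Qed.

Definition cyclic_add (g : cyclic_sum) : M := dsum_add (val g).
Lemma cyclic_add_linear : linear cyclic_add.
Proof. by move=> a g h; rewrite /cyclic_add !linearP. Qed.
HB.instance Definition _ := GRing.isLinear.Build R cyclic_sum M _ cyclic_add cyclic_add_linear.

Lemma cyclic_add_surjective m : exists g, cyclic_add g = m.
Proof.
have cyc_m : cyclic_coords (dsum_inj m m).
  apply/asboolP => k; rewrite mcoeffU.
  by case: eqP => [->|_]; [exists 1; rewrite scale1r | exists 0; rewrite scale0r].
by exists (exist _ (dsum_inj m m) cyc_m); rewrite /cyclic_add dsum_add_inj.
Qed.
End CyclicSum.

Section MNilpotence.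
Variables (R : pzRingType) (M : lmodType R).

Lemma M_Nil_star_Nil_star (X : lmodType R) (x : X) : M_Nil_star M x -> Nil_star x.
Proof.
move=> [n [r [m [y [f [-> nil_f]]]]]].
by exists n, r, (fun i => f i (m i)); split => // i; case: (nil_f i).
Qed.

Definition M_nil_term (v : M) : Prop :=
  exists (r : R) (m y : M) (f : {linear M -> M}),
    [/\ v = r *: f m, forall m', exists t : R, f m' = t *: y & snil_cond r (f m)].

Lemma M_Nil_star_of_terms x : sum_of M_nil_term x -> M_Nil_star M x.
Proof.
move=> [n [v [-> nil_v]]].
have [r /choice[m /choice[y /choice[f rmyf]]]] := choice nil_v.
exists n, r, m, y, f; split=> [|i]; last by case: (rmyf i).
by apply: eq_bigr => i _; case: (rmyf i).
Qed.

Section Lift.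
Variables (h : {linear M -> cyclic_sum M}) (k : M).

Definition lift_coord (m : M) : M := (val (h m))@_k.
Lemma lift_coord_linear : linear lift_coord.
Proof. by move=> a u v; rewrite /lift_coord !linearP mcoeffD mcoeff_dsumZ. Qed.
HB.instance Definition _ := GRing.isLinear.Build R M M _ lift_coord lift_coord_linear.
End Lift.

(* Nil_*(M) <= M-Nil_*(M): lift id_M through (+)_{z in M} Rz -> M and split
   each term a.y along the coordinates of the lift. *)
Lemma Nil_star_M_Nil_star : projective_in_sigma M ->
  forall x : M, Nil_star x -> M_Nil_star M x.
Proof.
move=> projM x /Nil_starE nil_x; apply/M_Nil_star_of_terms; apply: sum_of_bind nil_x.
move=> _ [a [y [-> nil_ay]]].
have [h h_lift] := projM _ _ (cyclic_sum_in_sigma M) (self_in_sigma M)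
  (@cyclic_add R M) (@cyclic_add_surjective R M) idfun.
rewrite -[y in a *: y]h_lift /cyclic_add /dsum_add scaler_sumr.
apply: sum_of_sum => k; apply: sum_of1.
exists a, y, k, (lift_coord h k); split => //.
- by move=> m; exact: cyclic_coordsP.
- exact: snil_cond_linear.
Qed.
End MNilpotence.

Theorem corollary3p7 (R : pzRingType) (M : lmodType R) :
  projective_in_sigma M ->
  (forall x : M, Nil_star x <-> @prodMod R M (@Nil_star R M) M x) /\
  (forall x : M, Nil_star x <-> M_Nil_star M x).
Proof.
move=> projM; split=> x; split.
- exact: prodMod_sub.
- exact: prodMod_Nil_star.
- exact: Nil_star_M_Nil_star.
- exact: M_Nil_star_Nil_star.
Qed.
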